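(* Let $k>1$, $p>1$, and $r,s\in(0,1)$ with $r\ge s$. Then $$\left(\frac{\arcsin_p(s)}{\arcsin_p(r)}\right)^k\le\frac{\arcsin_p(s^k)}{\arcsin_p(r^k)},\qquad \left(\frac{\operatorname{artanh}_p(s)}{\operatorname{artanh}_p(r)}\right)^k\le\frac{\operatorname{artanh}_p(s^k)}{\operatorname{artanh}_p(r^k)},\qquad \frac{\operatorname{arsinh}_p(s^k)}{\operatorname{arsinh}_p(r^k)}\le\left(\frac{\operatorname{arsinh}_p(s)}{\operatorname{arsinh}_p(r)}\right)^k.$$
   Context: For $p>1$ and $y\in(0,1)$: $\arcsin_p y=\int_0^y(1-t^p)^{-1/p}dt$, $\operatorname{arsinh}_p y=\int_0^y(1+t^p)^{-1/p}dt$, $\operatorname{artanh}_p y=\int_0^y(1-t^p)^{-1}dt$. *)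

From Stdlib Require Import Reals.
From Coquelicot Require Import Coquelicot.
Open Scope R_scope.

(* Real power x^a for x > 0, extended by 0 for x <= 0 (so 0^a = 0 for a > 0). *)
Definition rpow (x a : R) : R :=
  if Rlt_dec 0 x then Rpower x a else 0.

Definition arcsin_p (p y : R) : R :=
  RInt (fun t => rpow (1 - rpow t p) (- / p)) 0 y.

Definition arsinh_p (p y : R) : R :=
  RInt (fun t => rpow (1 + rpow t p) (- / p)) 0 y.

Definition artanh_p (p y : R) : R :=
  RInt (fun t => / (1 - rpow t p)) 0 y.

From Stdlib Require Import Reals Lra.
From Coquelicot Require Import Coquelicot.
Open Scope R_scope.

(* Write [G y = RInt g 0 y] for a positive integrand [g] on [0,1).  The map
   [y |-> ln G (y^k) - k ln G y] has derivative
   [(k / y) (z g z / G z - y g y / G y)] with [z = y^k < y], so it is monotone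
   as soon as the elasticity [x g x / G x] is.  Since
   [G x = x * RInt (fun u => g (x u)) 0 1], the elasticity is monotone when
   every ratio [g (x u) / g x] is monotone in [x].  For the three integrands
   [(1 + c t^p)^(-q)] that ratio is a power of
   [(1 + c x^p u^p) / (1 + c x^p)], which moves in [x] with the sign of [-c]. *)

Lemma rpow_pos x a : 0 < x -> rpow x a = Rpower x a.
Proof. intros Hx; unfold rpow; destruct (Rlt_dec 0 x); [reflexivity | lra]. Qed.

Lemma rpow_nonpos x a : x <= 0 -> rpow x a = 0.
Proof. intros Hx; unfold rpow; destruct (Rlt_dec 0 x); [lra | reflexivity]. Qed.

Lemma Rpower_gt_0 x a : 0 < Rpower x a.
Proof. apply exp_pos. Qed.

Lemma rpow_ge_0 x a : 0 <= rpow x a.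
Proof. unfold rpow; destruct (Rlt_dec 0 x); [left; apply Rpower_gt_0 | lra]. Qed.

Lemma rpow_1_l a : rpow 1 a = 1.
Proof. rewrite rpow_pos by lra. unfold Rpower. rewrite ln_1, Rmult_0_r. apply exp_0. Qed.

Lemma rpow_le_compat p x y : 0 <= p -> 0 <= y <= x -> rpow y p <= rpow x p.
Proof.
  intros Hp Hyx. destruct (Rlt_or_le 0 y) as [Hy | Hy].
  - rewrite !rpow_pos by lra. apply Rle_Rpower_l; lra.
  - rewrite (rpow_nonpos y) by lra. apply rpow_ge_0.
Qed.

Lemma rpow_lt_1 p t : 0 < p -> t < 1 -> rpow t p < 1.
Proof.
  intros Hp Ht. destruct (Rlt_or_le 0 t) as [Ht0 | Ht0].
  - rewrite <- (rpow_1_l p), !rpow_pos by lra. apply Rlt_Rpower_l; lra.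
  - rewrite rpow_nonpos by lra. lra.
Qed.

Lemma rpow_mult_distr p x u : 0 <= x -> 0 <= u -> rpow (x * u) p = rpow x p * rpow u p.
Proof.
  intros Hx Hu. destruct (Rle_lt_or_eq_dec 0 x Hx) as [Hx0 | <-].
  2: { rewrite Rmult_0_l, rpow_nonpos by lra. ring. }
  destruct (Rle_lt_or_eq_dec 0 u Hu) as [Hu0 | <-].
  2: { rewrite Rmult_0_r, rpow_nonpos by lra. ring. }
  rewrite !rpow_pos by nra. now rewrite Rpower_mult_distr.
Qed.

Lemma Rpower_lt_base y k : 0 < y < 1 -> 1 < k -> Rpower y k < y.
Proof.
  intros Hy Hk. unfold Rpower. rewrite <- (exp_ln y) at 2 by lra.
  apply exp_increasing.
  assert (ln y < 0) by (rewrite <- ln_1; apply ln_increasing; lra).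
  nra.
Qed.

Lemma Rpower_opp_le_compat q X Y : 0 <= q -> 0 < X <= Y -> Rpower Y (- q) <= Rpower X (- q).
Proof.
  intros Hq HXY. rewrite !Rpower_Ropp.
  apply Rinv_le_contravar; [apply Rpower_gt_0 | apply Rle_Rpower_l; lra].
Qed.

Lemma exp_sub_sign sg a b : sg * (b - a) <= 0 -> 0 <= sg * (exp a - exp b).
Proof.
  intros H.
  assert (Hmono : forall x y, x <= y -> exp x <= exp y).
  { intros x y Hxy. destruct (Rle_lt_or_eq_dec x y Hxy) as [Hlt | ->]; [|lra].
    left; now apply exp_increasing. }
  destruct (Rtotal_order sg 0) as [Hs | [-> | Hs]].
  - assert (exp a <= exp b) by (apply Hmono; nra). nra.
  - lra.
  - assert (exp b <= exp a) by (apply Hmono; nra). nra.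
Qed.

Lemma continuous_rpow_base x a : 0 < x -> continuous (fun z => rpow z a) x.
Proof.
  intros Hx. apply continuous_ext_loc with (fun z => Rpower z a).
  - exists (mkposreal x Hx). intros y Hy. change (Rabs (y - x) < x) in Hy.
    destruct (Rabs_def2 _ _ Hy). symmetry; apply rpow_pos; lra.
  - apply (continuous_comp (fun z => a * ln z) exp); [|apply continuous_exp].
    apply (continuous_mult (fun _ => a) ln); [apply continuous_const | now apply continuous_ln].
Qed.

Lemma continuous_rpow_0 p : 0 < p -> continuous (fun z => rpow z p) 0.
Proof.
  intros Hp. apply (proj2 (filterlim_locally _ _)). intros eps.
  exists (mkposreal _ (Rpower_gt_0 eps (/ p))). intros y Hy.
  change (Rabs (y - 0) < Rpower eps (/ p)) in Hy.
  change (Rabs (rpow y p - rpow 0 p) < eps).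
  rewrite (rpow_nonpos 0) by lra. rewrite Rminus_0_r in *.
  destruct (Rlt_or_le 0 y) as [Hy0 | Hy0].
  - rewrite Rabs_pos_eq in Hy by lra. rewrite rpow_pos, Rabs_pos_eq by (lra || (left; apply Rpower_gt_0)).
    replace (pos eps) with (Rpower (Rpower eps (/ p)) p).
    + apply Rlt_Rpower_l; lra.
    + rewrite Rpower_mult, Rinv_l by lra. apply Rpower_1, cond_pos.
  - rewrite rpow_nonpos, Rabs_R0 by lra. apply cond_pos.
Qed.

Lemma continuous_rpow p t : 0 < p -> continuous (fun z => rpow z p) t.
Proof.
  intros Hp. destruct (Rtotal_order t 0) as [Ht | [-> | Ht]].
  - apply continuous_ext_loc with (fun _ => 0); [|apply continuous_const].
    exists (mkposreal (- t) ltac:(lra)). intros y Hy. change (Rabs (y - t) < - t) in Hy.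
    destruct (Rabs_def2 _ _ Hy). symmetry; apply rpow_nonpos; lra.
  - now apply continuous_rpow_0.
  - now apply continuous_rpow_base.
Qed.

Section RIntPowerRatio.

Variable g : R -> R.
Hypothesis g_cont : forall t, 0 <= t < 1 -> continuous g t.
Hypothesis g_pos : forall t, 0 <= t < 1 -> 0 < g t.

Lemma ex_RInt_g x : 0 <= x < 1 -> ex_RInt g 0 x.
Proof.
  intros Hx. apply (@ex_RInt_continuous R_CompleteNormedModule). intros z Hz.
  rewrite Rmin_left, Rmax_right in Hz by lra. apply g_cont; lra.
Qed.

Lemma RInt_g_gt_0 x : 0 < x < 1 -> 0 < RInt g 0 x.
Proof. intros Hx. apply RInt_gt_0; [lra | intros; apply g_pos; lra | intros; apply g_cont; lra]. Qed.

Lemma is_derive_RInt_g x : 0 < x < 1 -> is_derive (fun z => RInt g 0 z) x (g x).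
Proof.
  intros Hx. apply is_derive_RInt with (a := 0); [|apply g_cont; lra].
  assert (Hd : 0 < Rmin x (1 - x)) by (apply Rmin_glb_lt; lra).
  exists (mkposreal _ Hd). intros b Hb. change (Rabs (b - x) < Rmin x (1 - x)) in Hb.
  destruct (Rabs_def2 _ _ Hb). pose proof (Rmin_l x (1 - x)). pose proof (Rmin_r x (1 - x)).
  apply (@RInt_correct R_CompleteNormedModule), ex_RInt_g; lra.
Qed.

Lemma is_RInt_g_rescaled x : 0 < x < 1 -> is_RInt (fun u => x * g (x * u)) 0 1 (RInt g 0 x).
Proof.
  intros Hx.
  assert (Hg : is_RInt g (x * 0 + 0) (x * 1 + 0) (RInt g 0 x)).
  { replace (x * 0 + 0) with 0 by ring. replace (x * 1 + 0) with x by ring.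
    apply (@RInt_correct R_CompleteNormedModule), ex_RInt_g; lra. }
  apply (is_RInt_ext (fun u => scal x (g (x * u + 0)))).
  - intros u _. now rewrite Rplus_0_r.
  - exact (is_RInt_comp_lin g x 0 0 1 _ Hg).
Qed.

(* [g (x u) / g x] is monotone in [x], nonincreasing when [sg > 0] and
   nondecreasing when [sg < 0]. *)
Variable sg : R.
Hypothesis g_ratio_mono : forall x y u, 0 < y <= x -> x < 1 -> 0 <= u <= 1 ->
  0 <= sg * (g (y * u) * g x - g (x * u) * g y).

Lemma elasticity_mono x y : 0 < y <= x -> x < 1 ->
  0 <= sg * (x * g x * RInt g 0 y - y * g y * RInt g 0 x).
Proof.
  intros Hxy Hx.
  pose proof (is_RInt_scal _ _ _ (x * g x) _ (is_RInt_g_rescaled y ltac:(lra))) as Iy.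
  pose proof (is_RInt_scal _ _ _ (y * g y) _ (is_RInt_g_rescaled x ltac:(lra))) as Ix.
  apply (is_RInt_ge_0 _ 0 1 _ ltac:(lra) (is_RInt_scal _ _ _ sg _ (is_RInt_minus _ _ _ _ _ _ Iy Ix))).
  intros u Hu. change (0 <= sg * (x * g x * (y * g (y * u)) + - (y * g y * (x * g (x * u))))).
  replace (sg * (x * g x * (y * g (y * u)) + - (y * g y * (x * g (x * u)))))
    with (x * y * (sg * (g (y * u) * g x - g (x * u) * g y))) by ring.
  apply Rmult_le_pos; [nra | apply g_ratio_mono; lra].
Qed.

Variable k : R.
Hypothesis k_gt_1 : 1 < k.

Definition log_defect y := ln (RInt g 0 (Rpower y k)) - k * ln (RInt g 0 y).

Definition log_defect' y :=
  k * Rpower y (k - 1) * (g (Rpower y k) / RInt g 0 (Rpower y k)) - k * (g y / RInt g 0 y).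

Lemma is_derive_log_defect y : 0 < y < 1 -> is_derive log_defect y (log_defect' y).
Proof.
  intros Hy. pose proof (Rpower_lt_base y k Hy k_gt_1). pose proof (Rpower_gt_0 y k).
  assert (Dpow : is_derive (fun y => Rpower y k) y (k * Rpower y (k - 1)))
    by (apply is_derive_Reals, derivable_pt_lim_power; lra).
  assert (Dz := is_derive_comp _ _ y _ _ (is_derive_RInt_g (Rpower y k) ltac:(lra)) Dpow).
  assert (Dlz := is_derive_comp ln _ y _ _
    (is_derive_ln _ (RInt_g_gt_0 (Rpower y k) ltac:(lra))) Dz).
  assert (Dly := is_derive_comp ln _ y _ _
    (is_derive_ln _ (RInt_g_gt_0 y Hy)) (is_derive_RInt_g y Hy)).
  assert (D := is_derive_minus _ _ y _ _ Dlz (is_derive_scal _ y k _ Dly)).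
  match type of D with is_derive _ _ ?l => replace (log_defect' y) with l end.
  - exact D.
  - unfold log_defect', minus, plus, opp, scal; simpl; unfold mult; simpl.
    unfold Rdiv. ring.
Qed.

Lemma log_defect'_sign y : 0 < y < 1 -> sg * log_defect' y <= 0.
Proof.
  intros Hy. pose proof (Rpower_lt_base y k Hy k_gt_1). pose proof (Rpower_gt_0 y k).
  assert (Hpow : Rpower y (k - 1) = Rpower y k / y).
  { replace (Rpower y k) with (Rpower y ((k - 1) + 1)) by (f_equal; ring).
    rewrite Rpower_plus, Rpower_1 by lra. field. lra. }
  pose proof (elasticity_mono y (Rpower y k) ltac:(lra) ltac:(lra)) as Hel.
  pose proof (RInt_g_gt_0 y Hy) as Gy.
  pose proof (RInt_g_gt_0 (Rpower y k) ltac:(lra)) as Gz.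
  unfold log_defect'. rewrite Hpow.
  set (z := Rpower y k) in *. set (A := RInt g 0 z) in *. set (B := RInt g 0 y) in *.
  replace (sg * (k * (z / y) * (g z / A) - k * (g y / B)))
    with (- (k / (y * A * B)) * (sg * (y * g y * A - z * g z * B))) by (field; lra).
  assert (0 < k / (y * A * B)) by (apply Rdiv_lt_0_compat; [lra | apply Rmult_lt_0_compat; nra]).
  nra.
Qed.

Lemma log_defect_mono s r : 0 < s <= r -> r < 1 -> sg * (log_defect r - log_defect s) <= 0.
Proof.
  intros Hsr Hr.
  destruct (MVT_gen log_defect s r log_defect') as [c [Hc ->]];
    rewrite ?Rmin_left, ?Rmax_right by lra.
  - intros x Hx. apply is_derive_log_defect; lra.
  - intros x Hx. apply continuity_pt_filterlim, (ex_derive_continuous log_defect).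
    exists (log_defect' x). apply is_derive_log_defect; lra.
  - rewrite Rmin_left, Rmax_right in Hc by lra.
    pose proof (log_defect'_sign c ltac:(lra)). nra.
Qed.

Lemma RInt_power_ratio s r : 0 < s <= r -> r < 1 ->
  0 <= sg * (RInt g 0 (rpow s k) / RInt g 0 (rpow r k) - rpow (RInt g 0 s / RInt g 0 r) k).
Proof.
  intros Hsr Hr.
  pose proof (Rpower_lt_base s k ltac:(lra) k_gt_1). pose proof (Rpower_gt_0 s k).
  pose proof (Rpower_lt_base r k ltac:(lra) k_gt_1). pose proof (Rpower_gt_0 r k).
  pose proof (RInt_g_gt_0 s ltac:(lra)). pose proof (RInt_g_gt_0 r ltac:(lra)).
  pose proof (RInt_g_gt_0 (Rpower s k) ltac:(lra)).
  pose proof (RInt_g_gt_0 (Rpower r k) ltac:(lra)).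
  rewrite !rpow_pos by (try apply Rdiv_lt_0_compat; lra).
  unfold Rpower at 3. rewrite <- (exp_ln (_ / _)) by (apply Rdiv_lt_0_compat; lra).
  rewrite !ln_div by lra.
  apply exp_sub_sign.
  pose proof (log_defect_mono s r Hsr Hr). unfold log_defect in *. lra.
Qed.

End RIntPowerRatio.

Definition power_integrand p c q t := rpow (1 + c * rpow t p) (- q).

Section PowerIntegrand.

Variables p c q : R.
Hypothesis p_gt_0 : 0 < p.
Hypothesis c_ge_m1 : -1 <= c.
Hypothesis q_ge_0 : 0 <= q.

Lemma power_integrand_base_gt_0 t : t < 1 -> 0 < 1 + c * rpow t p.
Proof. intros Ht. pose proof (rpow_ge_0 t p). pose proof (rpow_lt_1 p t p_gt_0 Ht). nra. Qed.

Lemma power_integrand_cont t : 0 <= t < 1 -> continuous (power_integrand p c q) t.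
Proof.
  intros Ht. apply (continuous_comp (fun z => 1 + c * rpow z p) (fun z => rpow z (- q))).
  - apply (continuous_plus (fun _ => 1)); [apply continuous_const|].
    apply (continuous_mult (fun _ => c)); [apply continuous_const | now apply continuous_rpow].
  - apply continuous_rpow_base, power_integrand_base_gt_0; lra.
Qed.

Lemma power_integrand_gt_0 t : 0 <= t < 1 -> 0 < power_integrand p c q t.
Proof.
  intros Ht. unfold power_integrand.
  rewrite rpow_pos by (apply power_integrand_base_gt_0; lra). apply Rpower_gt_0.
Qed.

Lemma power_integrand_ratio_mono x y u : 0 < y <= x -> x < 1 -> 0 <= u <= 1 ->
  0 <= - c * (power_integrand p c q (y * u) * power_integrand p c q x
              - power_integrand p c q (x * u) * power_integrand p c q y).
Proof.
  intros Hxy Hx Hu. unfold power_integrand.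
  pose proof (power_integrand_base_gt_0 x ltac:(lra)).
  pose proof (power_integrand_base_gt_0 y ltac:(lra)).
  pose proof (power_integrand_base_gt_0 (x * u) ltac:(nra)).
  pose proof (power_integrand_base_gt_0 (y * u) ltac:(nra)).
  rewrite !rpow_mult_distr in * by lra.
  pose proof (rpow_le_compat p x y (Rlt_le _ _ p_gt_0) ltac:(lra)).
  pose proof (rpow_ge_0 y p). pose proof (rpow_ge_0 u p).
  pose proof (rpow_le_compat p 1 u (Rlt_le _ _ p_gt_0) Hu). rewrite rpow_1_l in *.
  set (a := rpow x p) in *. set (b := rpow y p) in *. set (w := rpow u p) in *.
  rewrite !rpow_pos, !Rpower_mult_distr by lra.
  set (P := (1 + c * (b * w)) * (1 + c * a)). set (Q := (1 + c * (a * w)) * (1 + c * b)).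
  assert (HPQ : Q - P = - c * ((a - b) * (1 - w))) by (unfold P, Q; ring).
  assert (0 < P) by (apply Rmult_lt_0_compat; lra).
  assert (0 < Q) by (apply Rmult_lt_0_compat; lra).
  assert (0 <= (a - b) * (1 - w)) by nra.
  destruct (Rtotal_order c 0) as [Hc | [-> | Hc]].
  - pose proof (Rpower_opp_le_compat q P Q q_ge_0 ltac:(nra)). nra.
  - lra.
  - pose proof (Rpower_opp_le_compat q Q P q_ge_0 ltac:(nra)). nra.
Qed.

Lemma RInt_power_integrand_ratio k r s : 1 < k -> 0 < s <= r -> r < 1 ->
  0 <= - c * (RInt (power_integrand p c q) 0 (rpow s k) / RInt (power_integrand p c q) 0 (rpow r k)
              - rpow (RInt (power_integrand p c q) 0 s / RInt (power_integrand p c q) 0 r) k).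
Proof.
  intros Hk.
  exact (RInt_power_ratio _ power_integrand_cont power_integrand_gt_0
           _ power_integrand_ratio_mono k Hk s r).
Qed.

End PowerIntegrand.

Lemma arcsin_p_power_integrand p y : arcsin_p p y = RInt (power_integrand p (-1) (/ p)) 0 y.
Proof. apply RInt_ext. intros t _. unfold power_integrand. f_equal. ring. Qed.

Lemma arsinh_p_power_integrand p y : arsinh_p p y = RInt (power_integrand p 1 (/ p)) 0 y.
Proof. apply RInt_ext. intros t _. unfold power_integrand. f_equal. ring. Qed.

Lemma artanh_p_power_integrand p y : 0 < p -> y <= 1 ->
  artanh_p p y = RInt (power_integrand p (-1) 1) 0 y.
Proof.
  intros Hp Hy. apply RInt_ext. intros t Ht.
  assert (t < 1) by (pose proof (Rmax_lub 0 y 1 ltac:(lra) Hy); lra).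
  pose proof (rpow_lt_1 p t Hp ltac:(lra)).
  unfold power_integrand. rewrite (rpow_pos (1 + _)), Rpower_Ropp, Rpower_1 by lra. f_equal. ring.
Qed.

Theorem lemma2p6 (k p r s : R) :
  1 < k -> 1 < p -> 0 < r < 1 -> 0 < s < 1 -> s <= r ->
  rpow (arcsin_p p s / arcsin_p p r) k
    <= arcsin_p p (rpow s k) / arcsin_p p (rpow r k) /\
  rpow (artanh_p p s / artanh_p p r) k
    <= artanh_p p (rpow s k) / artanh_p p (rpow r k) /\
  arsinh_p p (rpow s k) / arsinh_p p (rpow r k)
    <= rpow (arsinh_p p s / arsinh_p p r) k.
Proof.
  intros Hk Hp Hr Hs Hsr.
  assert (Hq : 0 <= / p) by (left; apply Rinv_0_lt_compat; lra).
  rewrite !arcsin_p_power_integrand, !arsinh_p_power_integrand.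
  rewrite !(artanh_p_power_integrand p) by (lra || (left; apply rpow_lt_1; lra)).
  pose proof (RInt_power_integrand_ratio p (-1) (/ p) ltac:(lra) ltac:(lra) Hq k r s Hk ltac:(lra) ltac:(lra)).
  pose proof (RInt_power_integrand_ratio p (-1) 1 ltac:(lra) ltac:(lra) ltac:(lra) k r s Hk ltac:(lra) ltac:(lra)).
  pose proof (RInt_power_integrand_ratio p 1 (/ p) ltac:(lra) ltac:(lra) Hq k r s Hk ltac:(lra) ltac:(lra)).
  lra.
Qed.
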